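(* Let $q$ be a prime power and let $\mathcal{P}$ be a monic irreducible polynomial in $\mathbb{F}_q[T]$ of degree $m$. Then for every $n\in\mathbb{Z}_{\geqslant1}$, $\mathcal{P}$ is a c-Wieferich prime in $\mathbb{F}_q[T]$ if and only if $\mathcal{P}$ is a c-Wieferich prime in $\mathbb{F}_{q^{mn+1}}[T]$.
   Context: For a prime power $Q$, the Carlitz module over $\mathbb{F}_Q[T]$: for $N\in\mathbb{F}_Q[T]$, $\rho_N(X)$ is the additive polynomial determined by requiring $N\mapsto\rho_N$ to be an $\mathbb{F}_Q$-algebra homomorphism into additive polynomials (multiplication = composition) with $\rho_T(X)=X^Q+TX$. A monic irreducible $\mathcal{P}\in\mathbb{F}_Q[T]$ is a c-Wieferich prime in $\mathbb{F}_Q[T]$ if $\rho_{\mathcal{P}-1}(1)\equiv0\pmod{\mathcal{P}^2}$; it is known that this is equivalent to $F_{Q,\deg\mathcal{P}-1}\equiv0\pmod{\mathcal{P}}$, where $F_{Q,0}=1$ and $F_{Q,i}=(-1)^i+(T^{Q^i}-T)F_{Q,i-1}$. (Since $\gcd(m,mn+1)=1$, $\mathcal{P}$ remains irreducible over $\mathbb{F}_{q^{mn+1}}$.) *)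

From HB Require Import structures.
From mathcomp Require Import all_boot all_order all_algebra all_field.
Set Implicit Arguments. Unset Strict Implicit. Unset Printing Implicit Defensive.
Import GRing.Theory.
Local Open Scope ring_scope.

(* Carlitz module over F_Q[T] = {poly K}, where Q = #|K|.
   rho_T(x) = x^Q + T x ; rho_N = sum_i N_i rho_T^i  (the unique F_Q-algebra
   homomorphism N |-> rho_N into additive polynomials, composition as product).
   We only need rho_N evaluated at elements x of K[T]. *)
Definition carlitzT (K : finFieldType) (x : {poly K}) : {poly K} :=
  x ^+ #|K| + 'X * x.

Definition carlitz (K : finFieldType) (N x : {poly K}) : {poly K} :=
  \sum_(i < size N) N`_i *: iter i (@carlitzT K) x.

Definition cWieferich (K : finFieldType) (P : {poly K}) : Prop :=
  [/\ P \is monic, irreducible_poly P & P ^+ 2 %| carlitz (P - 1) 1].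

From HB Require Import structures.
From mathcomp Require Import all_boot all_order all_algebra all_field.
From mathcomp Require Import ring.
From Stdlib Require Import Classical.
Set Implicit Arguments. Unset Strict Implicit. Unset Printing Implicit Defensive.
Import GRing.Theory.
Local Open Scope ring_scope.

(* Let Q = #|F| and k = m n + 1.  If g is a monic irreducible factor of P
   over L, of degree d, then T^(Q^(d k)) = T and T^(Q^m) = T mod g, hence
   T^(Q^(gcd(m, d))) = T mod g since gcd(m, k) = 1.  As P is irreducible over
   F, it then divides T^(Q^(gcd(m, d))) - T, which forces m <= gcd(m, d) <= d:
   P stays irreducible over L.
   The Carlitz module of L[T] is that of F[T] with x^Q replaced by x^(Q^k) in
   rho_T, and x^(Q^k) = x^Q mod P^2: from x^(Q^(m n)) = x + b P, raising to
   the Q-th power gives x^(Q^k) = x^Q + b^Q P^Q.  So rho_(P-1)(1) is the same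
   modulo P^2 over F and over L. *)

Lemma dvdp_subrXX (R : idomainType) (g x y : {poly R}) k :
  g %| x - y -> g %| x ^+ k - y ^+ k.
Proof. by move=> gxy; rewrite subrXX dvdp_mulr. Qed.

Section FrobeniusFixed.

Variables (R : idomainType) (g h : {poly R}) (Q : nat).

Definition frob_fixed k := g %| h ^+ (Q ^ k) - h.

Lemma frob_fixed0 : frob_fixed 0.
Proof. by rewrite /frob_fixed expn0 expr1 subrr dvdp0. Qed.

Lemma frob_fixedD a b : frob_fixed a -> frob_fixed b -> frob_fixed (a + b).
Proof.
rewrite /frob_fixed expnD mulnC exprM => ga gb.
rewrite -(subrK (h ^+ (Q ^ a)) (_ ^+ _)) -addrA.
by rewrite dvdp_add // dvdp_subrXX.
Qed.

Lemma frob_fixedMr a c : frob_fixed a -> frob_fixed (a * c).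
Proof.
move=> ga; elim: c => [|c IHc]; first by rewrite muln0 frob_fixed0.
by rewrite mulnS frob_fixedD.
Qed.

Lemma frob_fixed_subn a b : frob_fixed (a + b) -> frob_fixed b -> frob_fixed a.
Proof.
rewrite /frob_fixed expnD mulnC exprM => gab gb.
rewrite -(subrK ((h ^+ (Q ^ b)) ^+ (Q ^ a)) (h ^+ _)) -addrA.
by rewrite dvdp_add // -opprB dvdpNr dvdp_subrXX.
Qed.

Lemma frob_fixed_gcd a b :
  (0 < a)%N -> frob_fixed a -> frob_fixed b -> frob_fixed (gcdn a b).
Proof.
move=> a_gt0 ga gb; have [u _ /dvdnP[c def_c]] := Bezoutl b a_gt0.
by apply: (@frob_fixed_subn _ (u * b)); rewrite ?def_c mulnC frob_fixedMr.
Qed.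

End FrobeniusFixed.

Lemma expf_card_exp (F : finFieldType) (c : F) k : c ^+ (#|F| ^ k) = c.
Proof. by elim: k => [|k IHk]; rewrite ?expr1 // expnS exprM expf_card IHk. Qed.

Lemma poly_exprD_card (F : finFieldType) (a b : {poly F}) k :
  (a + b) ^+ (#|F| ^ k) = a ^+ (#|F| ^ k) + b ^+ (#|F| ^ k).
Proof.
have [p p_pr pF] := finPcharP F.
have pFX : p \in [pchar {poly F}] by rewrite pchar_poly.
apply: exprDn_pchar; rewrite (eq_pnat _ (pcharf_eq pFX)).
by rewrite (card_pprimeChar pF) -expnM pnatX pnat_id.
Qed.

Lemma frob_fixed_X (F : finFieldType) (P h : {poly F}) k :
  frob_fixed P 'X #|F| k -> frob_fixed P h #|F| k.
Proof.
rewrite /frob_fixed => PX; elim/poly_ind: h => [|h c IHh].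
  rewrite expr0n expn_eq0 -leqn0 leqNgt (ltnW (finNzRing_gt1 F)) /=.
  by rewrite subrr dvdp0.
rewrite (poly_exprD_card (h * 'X)) exprMn -rmorphXn /= expf_card_exp.
set M := (#|F| ^ k)%N.
have -> : h ^+ M * 'X ^+ M + c%:P - (h * 'X + c%:P) =
          (h ^+ M - h) * 'X ^+ M + h * ('X ^+ M - 'X) by ring.
by apply: dvdp_add; [apply: dvdp_mulr | apply: dvdp_mull].
Qed.

Section QuotientField.

Variables (K : finFieldType) (g : {poly K}).
Hypotheses (g_monic : g \is monic) (g_irr : irreducible_poly g).
Let gI : monic_irreducible_poly g := (g_irr, g_monic).
Let Kg := {poly %/ g with gI}.

Lemma in_qpoly_eq (p q : {poly K}) :
  (in_qpoly g p == in_qpoly g q :> Kg) = (g %| p - q).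
Proof.
rewrite -val_eqE /= (mk_monicE gI) -!(Pdiv.IdomainMonic.modpE g_monic).
by rewrite -subr_eq0 -modpN -modpD; apply/eqP/modp_eq0P.
Qed.

Lemma in_qpolyK (x : Kg) : in_qpoly g x = x.
Proof. by apply: val_inj; apply: in_qpoly_small; apply: size_mk_monic. Qed.

Lemma frob_fixed_deg h : frob_fixed g h #|K| (size g).-1.
Proof.
have /eqP := expf_card (in_qpoly g h : Kg).
by rewrite card_qfpoly -rmorphXn in_qpoly_eq.
Qed.

Lemma frob_fixed_X_deg_le k :
  (0 < k)%N -> frob_fixed g 'X #|K| k -> ((size g).-1 <= k)%N.
Proof.
move=> k_gt0 /frob_fixed_X gX.
have fixK (x : Kg) : root ('X^(#|K| ^ k) - 'X) x.
  rewrite /root !hornerE subr_eq0.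
  rewrite -[x in _ == x]in_qpolyK -[x in x ^+ _]in_qpolyK -rmorphXn.
  by rewrite in_qpoly_eq; exact: gX.
have Q_gt1 := finNzRing_gt1 K.
have Qk_gt1 : (1 < #|K| ^ k)%N.
  by rewrite -(expn0 #|K|) ltn_exp2l // -(prednK k_gt0).
have sizeR : size ('X^(#|K| ^ k) - 'X : {poly Kg}) = (#|K| ^ k).+1.
  by rewrite size_polyDl size_polyXn // size_polyN size_polyX.
have := @max_ring_poly_roots _ ('X^(#|K| ^ k) - 'X) (enum Kg).
rewrite -size_poly_eq0 sizeR uniq_rootsE enum_uniq -cardE card_qfpoly ltnS.
rewrite leq_exp2l //; apply=> //; exact/allP.
Qed.

End QuotientField.

Lemma eqp_irredp (R : idomainType) (p q : {poly R}) :
  p %= q -> irreducible_poly p -> irreducible_poly q.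
Proof.
move=> pq [p_gt1 p_irr]; split=> [|d d_ne1 dq]; first by rewrite -(eqp_size pq).
have dp : d %= p by apply: p_irr; rewrite // (eqp_dvdr _ pq).
exact: eqp_trans dp pq.
Qed.

Lemma ex_irredp_dvdp (R : fieldType) (q : {poly R}) :
  (1 < size q)%N -> exists2 g, irreducible_poly g & g %| q.
Proof.
have [n] := ubnP (size q); elim: n q => // n IHn q.
rewrite ltnS => le_q_n q_gt1.
apply: NNPP => no_g; apply: (no_g); exists q => //; split=> // d d_ne1 dq.
apply/negPn/negP => dNq; apply: no_g.
have q_neq0 : q != 0 by rewrite -size_poly_gt0 ltnW.
have d_neq0 : d != 0 by apply: contraTneq dq => ->; rewrite dvd0p.
have lt_dq : (size d < size q)%N.
  by rewrite ltn_neqAle dvdp_size_eqp // dNq dvdp_leq.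
have d_gt1 : (1 < size d)%N by rewrite ltn_neqAle eq_sym d_ne1 size_poly_gt0.
have [g g_irr gd] := IHn d (leq_trans lt_dq le_q_n) d_gt1.
by exists g; last exact: dvdp_trans gd dq.
Qed.

Lemma ex_monic_irredp_dvdp (R : fieldType) (q : {poly R}) :
  (1 < size q)%N -> exists g, [/\ g \is monic, irreducible_poly g & g %| q].
Proof.
move=> /ex_irredp_dvdp[g g_irr gq].
have lc_neq0 : lead_coef g != 0 by rewrite lead_coef_eq0 irredp_neq0.
have gE : (lead_coef g)^-1 *: g %= g by rewrite eqp_scale ?invr_eq0.
exists ((lead_coef g)^-1 *: g); split.
- by apply/monicP; rewrite lead_coefZ mulVf.
- by apply: eqp_irredp g_irr; rewrite eqp_sym.
- by rewrite (eqp_dvdl _ gE).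
Qed.

Lemma irredp_dvdp_map (F L : fieldType) (f : {rmorphism F -> L})
    (P r : {poly F}) (g : {poly L}) :
  irreducible_poly P -> (1 < size g)%N ->
  g %| map_poly f P -> g %| map_poly f r -> P %| r.
Proof.
move=> P_irr g_gt1 gP gr.
have d_neq0 : gcdp P r != 0 by rewrite gcdp_eq0 negb_and irredp_neq0.
have d_ne1 : size (gcdp P r) != 1%N.
  have gd : g %| map_poly f (gcdp P r) by rewrite gcdp_map dvdp_gcd gP.
  rewrite neq_ltn -(size_map_poly f) (leq_trans g_gt1) ?orbT //.
  by rewrite dvdp_leq ?map_poly_eq0.
by rewrite -(eqp_dvdl _ (P_irr _ d_ne1 (dvdp_gcdl P r))) dvdp_gcdr.
Qed.

Lemma irredp_map_coprime (F L : finFieldType) (f : {rmorphism F -> L})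
    (P : {poly F}) k :
  P \is monic -> irreducible_poly P -> #|L| = (#|F| ^ k)%N ->
  coprime (size P).-1 k -> irreducible_poly (map_poly f P).
Proof.
move=> P_monic P_irr cardL; set m := (size P).-1 => co_mk.
have sizeP : size P = m.+1 by rewrite prednK // size_poly_gt0 irredp_neq0.
have m_gt0 : (0 < m)%N by rewrite -ltnS -sizeP; case: P_irr.
have Pf_neq0 : map_poly f P != 0 by rewrite map_poly_eq0 irredp_neq0.
split=> [|q q_ne1 qP]; first by rewrite size_map_poly sizeP ltnS.
have q_neq0 : q != 0 by apply: contraTneq qP => ->; rewrite dvd0p.
have q_gt1 : (1 < size q)%N by rewrite ltn_neqAle eq_sym q_ne1 size_poly_gt0.
have [g [g_monic g_irr gq]] := ex_monic_irredp_dvdp q_gt1.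
have gP := dvdp_trans gq qP.
have g_gt1 : (1 < size g)%N by case: g_irr.
set d := (size g).-1; have sizeg : size g = d.+1 by rewrite prednK // ltnW.
have g_dk : frob_fixed g 'X #|F| (d * k).
  have := frob_fixed_deg g_monic g_irr 'X.
  by rewrite /frob_fixed cardL -expnM (mulnC k).
have g_m : frob_fixed g 'X #|F| m.
  have := frob_fixed_deg P_monic P_irr 'X.
  rewrite /frob_fixed -(dvdp_map f) rmorphB rmorphXn /= map_polyX.
  exact: dvdp_trans.
have := frob_fixed_gcd m_gt0 g_m g_dk; rewrite Gauss_gcdl //.
set j := gcdn m d => g_j.
have P_j : frob_fixed P 'X #|F| j.
  rewrite /frob_fixed.
  apply: (irredp_dvdp_map P_irr g_gt1 gP).
  by rewrite rmorphB rmorphXn /= map_polyX; exact: g_j.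
have le_mj : (m <= j)%N.
  by apply: (frob_fixed_X_deg_le P_monic P_irr _ P_j); rewrite gcdn_gt0 m_gt0.
have le_jd : (j <= d)%N.
  by apply: dvdn_leq; [rewrite -ltnS -sizeg | exact: dvdn_gcdr].
rewrite -dvdp_size_eqp // eqn_leq dvdp_leq //= size_map_poly sizeP.
by rewrite (leq_trans _ (dvdp_leq q_neq0 gq)) // sizeg ltnS (leq_trans le_mj).
Qed.

(* [carlitz N x] is [gcarlitz #|K| N x]; freeing the exponent lets the
   Carlitz module of L[T] be computed inside F[T]. *)
Definition gcarlitzT (R : nzRingType) (E : nat) (x : {poly R}) : {poly R} :=
  x ^+ E + 'X * x.

Definition gcarlitz (R : nzRingType) (E : nat) (N x : {poly R}) : {poly R} :=
  \sum_(i < size N) N`_i *: iter i (gcarlitzT E) x.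

Lemma map_carlitz (F : fieldType) (L : finFieldType) (f : {rmorphism F -> L})
    (N x : {poly F}) :
  carlitz (map_poly f N) (map_poly f x) = map_poly f (gcarlitz #|L| N x).
Proof.
rewrite /carlitz size_map_poly rmorph_sum; apply: eq_bigr => i _.
rewrite coef_map /= map_polyZ; congr (_ *: _).
elim: (nat_of_ord i) => //= n ->.
by rewrite /carlitzT /gcarlitzT rmorphD rmorphM rmorphXn /= map_polyX.
Qed.

Lemma gcarlitz_congr (R : idomainType) (D : {poly R}) E1 E2 (N x : {poly R}) :
  (forall y, D %| y ^+ E1 - y ^+ E2) ->
  D %| gcarlitz E1 N x - gcarlitz E2 N x.
Proof.
move=> DE; rewrite /gcarlitz -sumrB.
apply: (big_ind (fun p => D %| p)) => [|a b|i _].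
- exact: dvdp0.
- exact: dvdp_add.
rewrite -scalerBr -mul_polyC dvdp_mull //.
elim: (nat_of_ord i) => [|n IHn] /=; first by rewrite subrr dvdp0.
set a := iter n _ x; set b := iter n _ x.
have -> : gcarlitzT E1 a - gcarlitzT E2 b =
          (a ^+ E1 - a ^+ E2) + (a ^+ E2 - b ^+ E2) + 'X * (a - b).
  by rewrite /gcarlitzT; ring.
by rewrite dvdp_add ?dvdp_mull // dvdp_add ?dvdp_subrXX.
Qed.

Lemma sqr_dvdp_exp_card_succ (F : finFieldType) (P x : {poly F}) k :
  P \is monic -> irreducible_poly P -> ((size P).-1 %| k)%N ->
  P ^+ 2 %| x ^+ (#|F| ^ k.+1) - x ^+ #|F|.
Proof.
move=> P_monic P_irr /dvdnP[c ->].
have /dvdpP[b xE] := frob_fixedMr c (frob_fixed_deg P_monic P_irr x).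
rewrite expnSr exprM mulnC -[x ^+ _](subrK x) xE.
have := poly_exprD_card (b * P) x 1; rewrite expn1 => ->.
by rewrite addrK exprMn dvdp_mull // dvdp_exp2l // finNzRing_gt1.
Qed.

Lemma carlitz_map_sqr_dvdp (F L : finFieldType) (f : {rmorphism F -> L})
    (P N x : {poly F}) k :
  P \is monic -> irreducible_poly P -> ((size P).-1 %| k)%N ->
  #|L| = (#|F| ^ k.+1)%N ->
  (map_poly f P ^+ 2 %| carlitz (map_poly f N) (map_poly f x))
    = (P ^+ 2 %| carlitz N x).
Proof.
move=> P_monic P_irr Pk cardL.
rewrite map_carlitz -rmorphXn dvdp_map.
have D : P ^+ 2 %| gcarlitz #|L| N x - carlitz N x.
  by apply: gcarlitz_congr => y; rewrite cardL sqr_dvdp_exp_card_succ.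
by rewrite -(subrK (carlitz N x) (gcarlitz _ N x)) dvdp_addr.
Qed.

Theorem theorem5p1 (F L : finFieldType) (f : {rmorphism F -> L})
    (m n : nat) (P : {poly F}) :
  P \is monic -> irreducible_poly P -> size P = m.+1 ->
  (0 < n)%N -> #|L| = (#|F| ^ (m * n + 1))%N ->
  cWieferich P <-> cWieferich (map_poly f P).
Proof.
move=> P_monic P_irr sizeP _ cardL.
have co_m : coprime (size P).-1 (m * n + 1).
  by rewrite sizeP /coprime mulnC gcdnMDl gcdn1.
have Pf_irr := irredp_map_coprime f P_monic P_irr cardL co_m.
have m_mn : ((size P).-1 %| m * n)%N by rewrite sizeP dvdn_mulr.
rewrite addn1 in cardL.
rewrite /cWieferich map_monic -(rmorph1 (map_poly f)) -rmorphB.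
rewrite (carlitz_map_sqr_dvdp f _ _ P_monic P_irr m_mn cardL).
by split=> -[_ _ ?]; split.
Qed.
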